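(* Let $k$ be a field with $w:=\operatorname{char}k$, $X$ a normal $k$-variety, $U=\operatorname{Spec}B\subset X$ an affine open subset, and $V$ a prime divisor with $V\cap U=\operatorname{div}(g)$ for some $g\in B$. Let $D$ be a $\mathbb{Q}$-divisor with $D|_U=\frac pq (V\cap U)$, $p,q$ coprime, $q>0$; let $d\in\mathbb{Z}$ and $s:=\lfloor pd/q\rfloor$. Then with $\varphi_U(f)=fT^d\cdot T\partial_T$ and $\psi_U(\delta)=\sigma_\delta$ there are short exact sequences of $\mathcal{O}_U$-modules as follows. If $pd\equiv-1\pmod q$ and $w\nmid q$: $0\to\mathcal{O}_U(sV)\xrightarrow{\varphi_U}(\pi_*\Theta_C)_d|_U\xrightarrow{\psi_U}\Theta_U(sV)\to0$. If $pd\equiv-1\pmod q$ and $w\mid q$: $0\to\mathcal{O}_U(sV+V)\xrightarrow{\varphi_U}(\pi_*\Theta_C)_d|_U\xrightarrow{\psi_U}\mathcal{D}er_U(-\log V)(sV)\to0$. Otherwise: $0\to\mathcal{O}_U(sV)\xrightarrow{\varphi_U}(\pi_*\Theta_C)_d|_U\xrightarrow{\psi_U}\mathcal{D}er_U(-\log V)(sV)\to0$.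
   Context: For integers, ''$w\mid q$'' means $q\in w\mathbb{Z}$ (never true when $w=0$). For a $\mathbb{Q}$-divisor $S$, $\mathcal{O}_X(S):=\mathcal{O}_X(\lfloor S\rfloor)$. $T$ is an indeterminate, $\mathcal{A}:=\bigoplus_{i\in\mathbb{Z}}\mathcal{O}_X(iD)T^i$ (on $U$ this is $\bigoplus_iBg^{-\lfloor pi/q\rfloor}T^i$), $\pi:C=\operatorname{Spec}_X\mathcal{A}\to X$, $\Theta_C=\mathcal{D}er_k(\mathcal{O}_C)$, and $(\pi_*\Theta_C)_d$ is the sheaf of $k$-derivations of $\mathcal{A}$ mapping $\mathcal{O}_X(iD)T^i$ into $\mathcal{O}_X((i+d)D)T^{i+d}$. Each such $\delta$ extends to $K(X)(T)$ and $T^{-d}\delta=\sigma_\delta+\alpha_\delta T\partial_T$ uniquely with $\alpha_\delta\in K(X)$, $\sigma_\delta$ a $k$-derivation of $K(X)$ (with $\sigma_\delta(T)=0$). $\Theta_U(sV)=\mathcal{D}er_k(\mathcal{O}_U)\otimes\mathcal{O}_U(sV)$ and $\mathcal{D}er_U(-\log V)(sV)=\mathcal{D}er_U(-\log V)\otimes\mathcal{O}_U(sV)$, where $\mathcal{D}er_U(-\log V)$ is the sheaf of $k$-derivations $\theta$ of $\mathcal{O}_U$ with $\theta(g\mathcal{O}_U)\subset g\mathcal{O}_U$. *)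

From HB Require Import structures.
From mathcomp Require Import all_boot all_order all_algebra.
Set Implicit Arguments. Unset Strict Implicit. Unset Printing Implicit Defensive.
Import Order.TTheory GRing.Theory Num.Theory.
Local Open Scope ring_scope.

Section Defs.
Variable K : fieldType.
(* K plays the role of the function field K(X) = Frac B.                     *)

Definition is_subfield (k : {pred K}) : Prop :=
  [/\ 1 \in k, {in k &, forall x y, x - y \in k},
      {in k &, forall x y, x * y \in k} & {in k, forall x, x^-1 \in k}].

Definition is_subring (B : {pred K}) : Prop :=
  [/\ 1 \in B, {in B &, forall x y, x - y \in B} & {in B &, forall x y, x * y \in B}].

Inductive gen_by (k : {pred K}) (s : seq K) : K -> Prop :=
  | gen_const c : c \in k -> gen_by k s c
  | gen_elt x : x \in s -> gen_by k s x
  | gen_add x y : gen_by k s x -> gen_by k s y -> gen_by k s (x + y)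
  | gen_opp x : gen_by k s x -> gen_by k s (- x)
  | gen_mul x y : gen_by k s x -> gen_by k s y -> gen_by k s (x * y).

Definition fg_algebra (k B : {pred K}) : Prop :=
  exists s : seq K, forall x, x \in B <-> gen_by k s x.

Definition is_frac_field_of (B : {pred K}) : Prop :=
  forall x : K, exists a b, [/\ a \in B, b \in B, b != 0 & x = a / b].

Definition integrally_closed (B : {pred K}) : Prop :=
  forall (P : {poly K}) (x : K),
    P \is monic -> P \is a polyOver B -> root P x -> x \in B.

(* g B is a (nonzero) prime ideal of B *)
Definition prime_elt (B : {pred K}) (g : K) : Prop :=
  [/\ g \in B, g != 0, g^-1 \notin B &
      {in B &, forall a b, (a * b) / g \in B -> a / g \in B \/ b / g \in B}].

(* w | q  where w = char k = char K  (never true in characteristic 0) *)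
Definition char_dvd (q : nat) : Prop := exists2 w : nat, w \in [pchar K] & (w %| q)%N.

(* degree-i piece of A over U: O_U(iD) = g^{-floor(p i / q)} B *)
Definition Apiece (B : {pred K}) (g : K) (p : int) (q : nat) (i : int) : {pred K} :=
  [pred x | x * g ^ ((p * i) %/ q%:Z)%Z \in B].

(* A homogeneous k-derivation of degree d of A = (+)_i A_i T^i, recorded by its
   components: delta (a T^i) = (delta i a) T^(i+d). *)
Definition graded_der (k B : {pred K}) (g : K) (p : int) (q : nat) (d : int)
    (delta : int -> K -> K) : Prop :=
  [/\ forall i, {in Apiece B g p q i, forall x, delta i x \in Apiece B g p q (i + d)},
      forall i, {in Apiece B g p q i &, forall x y, delta i (x + y) = delta i x + delta i y},
      forall i j, {in Apiece B g p q i & Apiece B g p q j, forall x y,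
          delta (i + j) (x * y) = delta i x * y + x * delta j y}
    & {in k, forall c, delta 0 c = 0}].

Definition graded_eq (B : {pred K}) (g : K) (p : int) (q : nat)
    (delta delta' : int -> K -> K) : Prop :=
  forall i, {in Apiece B g p q i, forall x, delta i x = delta' i x}.

(* phi_U(f) = f T^d . T d/dT :  a T^i |-> i f a T^(i+d) *)
Definition phiU (f : K) : int -> K -> K := fun i x => i%:~R * f * x.

(* psi_U(delta) = sigma_delta, recorded by its restriction to B (= degree 0),
   where T^{-d} delta (b) = sigma_delta(b) for b in B. *)
Definition psiU (delta : int -> K -> K) : K -> K := delta 0.

Definition kder (k B : {pred K}) (theta : K -> K) : Prop :=
  [/\ {in B &, forall x y, theta (x + y) = theta x + theta y},
      {in B &, forall x y, theta (x * y) = theta x * y + x * theta y}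
    & {in k, forall c, theta c = 0}].

(* sections of Theta_U(sV) = g^{-s} Der_k(B) *)
Definition Theta_sV (k B : {pred K}) (g : K) (s : int) (theta : K -> K) : Prop :=
  kder k B theta /\ {in B, forall x, theta x * g ^ s \in B}.

(* sections of Der_U(-log V)(sV) = g^{-s} {theta in Der_k(B) | theta(gB) in gB} *)
Definition LogDer_sV (k B : {pred K}) (g : K) (s : int) (theta : K -> K) : Prop :=
  Theta_sV k B g s theta /\ {in B, forall x, theta (g * x) * g ^ (s - 1) \in B}.

(* The sequence 0 -> O_U(tV) --phi--> (pi_* Theta_C)_d |_U --psi--> M -> 0
   is a well-defined short exact sequence (on sections over U). *)
Definition ses_U (k B : {pred K}) (g : K) (p : int) (q : nat) (d t : int)
    (M : (K -> K) -> Prop) : Prop :=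
  let N := [pred f : K | f * g ^ t \in B] in
  [/\ {in N, forall f, graded_der k B g p q d (phiU f)}
    & forall delta, graded_der k B g p q d delta -> M (psiU delta)] /\
  [/\ {in N &, forall f f', graded_eq B g p q (phiU f) (phiU f') -> f = f'},
      {in N, forall f, {in B, forall x, psiU (phiU f) x = 0}},
      forall delta, graded_der k B g p q d delta ->
        {in B, forall x, psiU delta x = 0} ->
        exists2 f, f \in N & graded_eq B g p q (phiU f) delta
    & forall theta, M theta ->
        exists2 delta, graded_der k B g p q d delta & {in B, forall x, psiU delta x = theta x}].

End Defs.

From HB Require Import structures.
From mathcomp Require Import all_boot all_order all_algebra.
From mathcomp Require Import zify ring.
Import Order.TTheory GRing.Theory Num.Theory.
Local Open Scope ring_scope.

(* On the chart, the degree-i piece of A is g^(-m_i) B with m_i = floor(p i / q).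
   A homogeneous derivation of degree d is determined by its restriction theta to B
   together with one scalar gam: it is sigma_theta + gam T d/dT, where sigma_theta
   extends theta by the quotient rule.  It respects the grading iff theta(B) lies in
   g^(-s) B and (i gam - m_i beta) g^(m_(i+d) - m_i) lies in B for every i, where
   beta = theta(g)/g.  The jump m_(i+d) - m_i is s or s + 1; when p d = -1 mod q it
   is s + 1 exactly when q does not divide p i, otherwise it is s at some i0 with
   p i0 = 1 mod q.  Combining the conditions at i = q and i = i0 by Bezout, and
   inverting q or p in k as the characteristic permits, identifies the kernel
   (multiples of T d/dT) and the image (derivations, resp. log derivations). *)

Definition floorq (p : int) (q : nat) (i : int) : int := ((p * i) %/ q%:Z)%Z.

Section FloorArithmetic.
Context (p : int) {q : nat}.
Hypothesis q_gt0 : (0 < q)%N.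

Local Notation m := (floorq p q).
Local Notation r i := (p * i - q%:Z * m i).

Lemma floorq0 : m 0 = 0.
Proof. by rewrite /floorq mulr0 div0z. Qed.

Lemma floorq_rem_bounds i : 0 <= r i < q%:Z.
Proof. rewrite /floorq; nia. Qed.

Lemma floorq_superadditive i j : 0 <= m (i + j) - m i - m j <= 1.
Proof. rewrite /floorq; nia. Qed.

Lemma floorq_q : m q%:Z = p.
Proof. by rewrite /floorq mulzK //; lia. Qed.

Lemma floorq_addq d : m (q%:Z + d) = p + m d.
Proof. by rewrite /floorq mulrDr divzMDl ?mulzK //; lia. Qed.

Lemma modz_eqN1E x : (x = -1 %[mod q%:Z])%Z <-> x - q%:Z * (x %/ q%:Z)%Z = q%:Z - 1.
Proof.
rewrite (modNz_nat 0 q_gt0) mod0n subr0.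
by have := divz_eq x q%:Z; split; lia.
Qed.

Lemma floorq_addS i d : r d = q%:Z - 1 -> p * i != q%:Z * m i ->
  m (i + d) - m i = m d + 1.
Proof.
have := floorq_rem_bounds i; have := floorq_rem_bounds d; have := floorq_rem_bounds (i + d).
move: (m i) (m d) (m (i + d)) => a b c; nia.
Qed.

Lemma floorq_addr1 i d : r d != q%:Z - 1 -> r i = 1 -> m (i + d) - m i = m d.
Proof.
have := floorq_rem_bounds i; have := floorq_rem_bounds d; have := floorq_rem_bounds (i + d).
move: (m i) (m d) (m (i + d)) => a b c; nia.
Qed.

Lemma q_gt1_of_rem d : r d != q%:Z - 1 -> (1 < q)%N.
Proof. have := floorq_rem_bounds d; move: (m d) => b; nia. Qed.

Lemma exists_floorq_rem1 : coprime `|p|%N q -> (1 < q)%N -> exists i, r i = 1.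
Proof.
move=> copq q_gt1; have [u [v e]] := Bezoutz p q%:Z.
have g1 : gcdz p q%:Z = 1 by rewrite /gcdz absz_nat; move/eqP: copq => ->.
rewrite g1 in e; exists u; have := floorq_rem_bounds u; move: (m u) => a h.
have h1 : q%:Z * (v + a) <= 1 by nia.
have h2 : 1 - q%:Z < q%:Z * (v + a) by nia.
have h3 : v + a = 0 by nia.
nia.
Qed.

End FloorArithmetic.

Section GradedDerivations.
Variables (K : fieldType) (k : {pred K}) (B : subringClosed K) (g : K).
Variables (p : int) (q : nat) (d : int).
Hypotheses (q_gt0 : (0 < q)%N) (g_neq0 : g != 0) (g_in : g \in B).

Local Notation m := (floorq p q).
Local Notation A := (Apiece B g p q).
Local Notation s := (m d).
Local Notation E i := (m (i + d) - m i).

Lemma ApieceE i x : (x \in A i) = (x * g ^ m i \in B).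
Proof. by []. Qed.

Lemma Apiece0 x : (x \in A 0) = (x \in B).
Proof. by rewrite ApieceE floorq0 expr0z mulr1. Qed.

Lemma expfzg_neq0 n : g ^ n != 0.
Proof. exact: expfz_neq0. Qed.

Lemma expfzN_Apiece i : g ^ (- m i) \in A i.
Proof. by rewrite ApieceE -expfzDr // addNr expr0z rpred1. Qed.

Lemma expfz_in n : 0 <= n -> g ^ n \in B.
Proof. by case: n => // n _; rewrite -exprnP rpredX. Qed.

Lemma expfz_le_in y n t : y * g ^ n \in B -> n <= t -> y * g ^ t \in B.
Proof.
move=> yn_in le_nt; rewrite -(subrKC n t) expfzDr // mulrA rpredM // expfz_in //.
by rewrite subr_ge0.
Qed.

Lemma mul_expfzN_Apiece c i : (c * g ^ (- m i) \in A (i + d)) = (c * g ^ E i \in B).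
Proof. by rewrite ApieceE -mulrA -expfzDr // addrC. Qed.

Lemma floorq_shift_ge i : s <= E i.
Proof. by have := floorq_superadditive p q_gt0 i d; lia. Qed.

Lemma leibniz_eq_phiU (delta : int -> K -> K) :
  (forall i j, {in A i & A j, forall x y,
      delta (i + j) (x * y) = delta i x * y + x * delta j y}) ->
  {in B, forall x, delta 0 x = 0} ->
  exists gam, graded_eq B g p q delta (phiU gam).
Proof.
move=> leib delta0.
(* [delta i] is multiplication by [c i], and the Leibniz rule makes [c] additive. *)
pose c i := delta i (g ^ (- m i)) * g ^ m i.
have deltaE i x : x \in A i -> delta i x = c i * x.
  rewrite ApieceE => xi; have -> : x = g ^ (- m i) * (x * g ^ m i).
    by rewrite -invr_expz; field; exact: expfzg_neq0.
  have xi0 : x * g ^ m i \in A 0 by rewrite Apiece0.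
  have := leib i 0 _ _ (expfzN_Apiece i) xi0; rewrite addr0 => ->.
  by rewrite delta0 // mulr0 addr0 /c -invr_expz; field; exact: expfzg_neq0.
have cD i j : c (i + j) = c i + c j.
  have gij_in : g ^ (- m i) * g ^ (- m j) \in A (i + j).
    rewrite ApieceE -!expfzDr // expfz_in //.
    by have := floorq_superadditive p q_gt0 i j; lia.
  have := leib i j _ _ (expfzN_Apiece i) (expfzN_Apiece j).
  rewrite (deltaE _ _ gij_in) !deltaE ?expfzN_Apiece // => e.
  apply: (mulIf (mulf_neq0 (expfzg_neq0 (- m i)) (expfzg_neq0 (- m j)))).
  by rewrite e; ring.
have c0 : c 0 = 0 by apply: (addrI (c 0)); rewrite -cD !addr0.
have cz (z : int) : c z = z%:~R * c 1.
  have cn (n : nat) : c n = n%:R * c 1.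
    elim: n => [|n IH]; first by rewrite c0 mul0r.
    by rewrite -addn1 PoszD cD IH natrD mulrDl mul1r.
  case: z => n; first exact: cn.
  have := cD (Negz n) n.+1; rewrite NegzE addNr c0 cn => /eqP.
  by rewrite eq_sym addr_eq0 => /eqP ->; rewrite mulrNz mulNr.
by exists (c 1) => i x xi; rewrite deltaE // cz /phiU mulrC mulrA.
Qed.

(* [lift_der theta gam] is [sigma + gam T d/dT], where [sigma] extends [theta] to
   [A_i = g^(-m_i) B] by the quotient rule. *)
Definition lift_der (theta : K -> K) (gam : K) : int -> K -> K :=
  fun i x => (i%:~R * gam - (m i)%:~R * (theta g / g)) * x
             + g ^ (- m i) * theta (x * g ^ m i).

(* [gam T d/dT + beta g d/dg] maps the generator [g^(-m_i) T^i] of every piece into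
   [A_(i+d) T^(i+d)]. *)
Definition admissible (gam beta : K) : Prop :=
  forall i, (i%:~R * gam - (m i)%:~R * beta) * g ^ E i \in B.

Lemma lift_der0 theta gam x : lift_der theta gam 0 x = theta x.
Proof. by rewrite /lift_der floorq0 !expr0z mulr1 mul1r !mul0r subrr mul0r add0r. Qed.

Section Lift.
Variables (theta : K -> K) (gam : K).
Hypothesis theta_der : kder k B theta.

Lemma lift_der_add i : {in A i &, forall x y,
  lift_der theta gam i (x + y) = lift_der theta gam i x + lift_der theta gam i y}.
Proof.
case: theta_der => thetaD _ _ x y; rewrite !ApieceE => xi yi.
by rewrite /lift_der (mulrDl x y) thetaD //; ring.
Qed.

Lemma lift_der_leibniz i j : {in A i & A j, forall x y,
  lift_der theta gam (i + j) (x * y)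
  = lift_der theta gam i x * y + x * lift_der theta gam j y}.
Proof.
case: theta_der => _ thetaM _ x y; rewrite !ApieceE => xi yi.
have [e [mijE /orP e01]] : exists e, m (i + j) = m i + m j + e /\ (e == 0) || (e == 1).
  exists (m (i + j) - m i - m j); split; first ring.
  by have := floorq_superadditive p q_gt0 i j; lia.
have gi := expfzg_neq0 (m i); have gj := expfzg_neq0 (m j).
rewrite /lift_der mijE -!invr_expz !expfzDr // !intrD.
have -> : x * y * (g ^ m i * g ^ m j * g ^ e) = (x * g ^ m i) * (y * g ^ m j) * g ^ e by ring.
have XY_in : (x * g ^ m i) * (y * g ^ m j) \in B by rewrite rpredM.
case: e01 => /eqP ->; rewrite ?expr0z ?expr1z ?mulr1.
  by rewrite (thetaM _ _ xi yi); field; rewrite gi gj g_neq0.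
by rewrite (thetaM _ _ XY_in g_in) (thetaM _ _ xi yi); field; rewrite gi gj g_neq0.
Qed.

Lemma lift_der_Apiece :
  {in B, forall x, theta x * g ^ s \in B} -> admissible gam (theta g / g) ->
  forall i, {in A i, forall x, lift_der theta gam i x \in A (i + d)}.
Proof.
move=> thetaB adm i x; rewrite !ApieceE => xi.
set e := m (i + d) - m i - m d.
have e_ge0 : 0 <= e by have := floorq_superadditive p q_gt0 i d; rewrite /e; lia.
have Ei : g ^ E i = g ^ m d * g ^ e by rewrite -expfzDr //; congr (g ^ _); rewrite /e; ring.
have mid : g ^ m (i + d) = g ^ m i * g ^ m d * g ^ e.
  by rewrite -!expfzDr //; congr (g ^ _); rewrite /e; ring.
have := adm i; rewrite Ei => admi.
have -> : lift_der theta gam i x * g ^ m (i + d) =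
   ((i%:~R * gam - (m i)%:~R * (theta g / g)) * (g ^ m d * g ^ e)) * (x * g ^ m i)
   + (theta (x * g ^ m i) * g ^ m d) * g ^ e.
  by rewrite /lift_der mid -invr_expz; field; rewrite ?expfzg_neq0 ?g_neq0.
by rewrite rpredD ?(rpredM admi xi) // rpredM ?thetaB ?expfz_in.
Qed.

Lemma graded_der_lift :
  {in B, forall x, theta x * g ^ s \in B} -> admissible gam (theta g / g) ->
  graded_der k B g p q d (lift_der theta gam).
Proof.
move=> thetaB adm; split.
- exact: lift_der_Apiece.
- exact: lift_der_add.
- exact: lift_der_leibniz.
- by case: theta_der => _ _ thetak c kc; rewrite lift_der0 thetak.
Qed.

End Lift.

Lemma kder1 theta : kder k B theta -> theta 1 = 0.
Proof.
case=> _ thetaM _; have := thetaM 1 1 (rpred1 B) (rpred1 B).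
by rewrite !mulr1 mul1r => e; apply: (addrI (theta 1)); rewrite addr0 -e.
Qed.

Lemma kder_psiU delta : graded_der k B g p q d delta -> kder k B (psiU delta).
Proof.
case=> _ deltaD leib deltak; split => // x y xB yB.
  by apply: deltaD; rewrite Apiece0.
by have := leib 0 0 x y; rewrite addr0; apply; rewrite Apiece0.
Qed.

Lemma Theta_sV_psiU delta : graded_der k B g p q d delta -> Theta_sV k B g s (psiU delta).
Proof.
move=> der; split; first exact: kder_psiU.
by case: der => deltaA _ _ _ x xB; have := deltaA 0 x; rewrite Apiece0 ApieceE add0r; apply.
Qed.

Lemma graded_der_liftE delta : graded_der k B g p q d delta ->
  exists gam, graded_eq B g p q delta (lift_der (psiU delta) gam).
Proof.
move=> der; have theta_der := kder_psiU _ der; case: (der) => _ _ leib _.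
pose delta' i x := delta i x - lift_der (psiU delta) 0 i x.
have [gam delta'E] : exists gam, graded_eq B g p q delta' (phiU gam).
  apply: leibniz_eq_phiU => [i j x y xi yj | x _].
    by rewrite /delta' leib // lift_der_leibniz //; ring.
  by rewrite /delta' lift_der0 subrr.
exists gam => i x xi; have := delta'E i x xi; rewrite /delta' /phiU /lift_der => e.
by rewrite -[delta i x](subrK (lift_der (psiU delta) 0 i x)) e /lift_der; ring.
Qed.

Lemma graded_der_admissible delta : graded_der k B g p q d delta ->
  exists gam, admissible gam (psiU delta g / g).
Proof.
move=> der; have [gam deltaE] := graded_der_liftE _ der.
exists gam => i; case: (der) => deltaA _ _ _; rewrite -mul_expfzN_Apiece.
set c := (_ - _).
have <- : delta i (g ^ (- m i)) = c * g ^ (- m i).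
  rewrite deltaE ?expfzN_Apiece // /lift_der -invr_expz mulVf ?expfzg_neq0 //.
  by rewrite (kder1 _ (kder_psiU _ der)) mulr0 addr0.
exact: deltaA (expfzN_Apiece i).
Qed.

Lemma graded_der_phiU f : admissible f 0 -> graded_der k B g p q d (phiU f).
Proof.
move=> adm; split=> [i x|i x y _ _|i j x y _ _|c _]; rewrite /phiU.
- rewrite !ApieceE => xi.
  have -> : g ^ m (i + d) = g ^ E i * g ^ m i by rewrite -expfzDr // subrK.
  have -> : i%:~R * f * x * (g ^ E i * g ^ m i) = (i%:~R * f * g ^ E i) * (x * g ^ m i).
    by ring.
  by have := adm i; rewrite mulr0 subr0 => admi; rewrite rpredM.
- by ring.
- by rewrite intrD; ring.
- by rewrite mulr0z !mul0r.
Qed.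

Lemma phiU_inj f f' : graded_eq B g p q (phiU f) (phiU f') -> f = f'.
Proof.
move=> /(_ 1 _ (expfzN_Apiece 1)); rewrite /phiU !mulr1z !mul1r.
exact: (mulIf (expfzg_neq0 _)).
Qed.

Lemma ker_psiU delta : graded_der k B g p q d delta -> {in B, forall x, psiU delta x = 0} ->
  exists2 f, admissible f 0 & graded_eq B g p q (phiU f) delta.
Proof.
move=> der delta0; case: (der) => deltaA _ leib _.
have [gam deltaE] := leibniz_eq_phiU _ leib delta0.
exists gam => [i|i x xi]; last by rewrite deltaE.
rewrite mulr0 subr0 -mul_expfzN_Apiece.
have <- : delta i (g ^ (- m i)) = i%:~R * gam * g ^ (- m i) by rewrite deltaE ?expfzN_Apiece.
exact: deltaA (expfzN_Apiece i).
Qed.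

Lemma ses_U_of_admissible t (M : (K -> K) -> Prop) :
  (forall f, f * g ^ t \in B <-> admissible f 0) ->
  (forall delta, graded_der k B g p q d delta -> M (psiU delta)) ->
  (forall theta, M theta ->
     Theta_sV k B g s theta /\ exists gam, admissible gam (theta g / g)) ->
  ses_U k B g p q d t M.
Proof.
move=> kerE psiM Mlift; split; split=> //.
- by move=> f ft; apply/graded_der_phiU/kerE.
- by move=> f f' _ _; exact: phiU_inj.
- by move=> f _ x _; rewrite /psiU /phiU mulr0z !mul0r.
- move=> delta der delta0; have [f adm eq_f] := ker_psiU _ der delta0.
  by exists f => //; apply/kerE.
- move=> theta /Mlift [[theta_der thetaB] [gam adm]].
  exists (lift_der theta gam); first exact: graded_der_lift.
  by move=> x _; rewrite /psiU lift_der0.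
Qed.

Lemma admissible_le gam beta :
  gam * g ^ s \in B -> beta * g ^ s \in B -> admissible gam beta.
Proof.
move=> gamB betaB i; rewrite mulrBl -!mulrA.
by apply: rpredB; apply: rpredM; rewrite ?rpred_int // (expfz_le_in _ _ _ _ (floorq_shift_ge i)).
Qed.

Lemma admissible_q gam beta :
  admissible gam beta -> (q%:~R * gam - p%:~R * beta) * g ^ s \in B.
Proof.
move/(_ q%:Z); rewrite floorq_q //.
by have -> : m (q%:Z + d) - p = s by rewrite floorq_addq // addrC addKr.
Qed.

Lemma admissible_bezout gam beta i0 t :
  admissible gam beta -> p * i0 - q%:Z * m i0 = 1 -> E i0 <= t -> s <= t ->
  gam * g ^ t \in B /\ beta * g ^ t \in B.
Proof.
move=> adm ri0 i0t st.
have ci0 := expfz_le_in _ _ _ (adm i0) i0t; have cq := expfz_le_in _ _ _ (admissible_q _ _ adm) st.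
have ri0K : (p%:~R * i0%:~R - q%:~R * (m i0)%:~R : K) = 1.
  by have := congr1 (fun z : int => z%:~R : K) ri0; rewrite /= intrB !intrM.
set ci := i0%:~R * gam - (m i0)%:~R * beta in ci0.
set cQ := q%:~R * gam - p%:~R * beta in cq.
(* Bezout: the coefficient matrix [[i0, -m i0], [q, -p]] has determinant -1. *)
have gamE : gam = p%:~R * ci - (m i0)%:~R * cQ.
  by rewrite -[gam in LHS]mul1r -{1}ri0K /ci /cQ; ring.
have betaE : beta = q%:~R * ci - i0%:~R * cQ.
  by rewrite -[beta in LHS]mul1r -{1}ri0K /ci /cQ; ring.
rewrite gamE betaE !mulrBl -!mulrA.
by split; apply: rpredB; apply: rpredM; rewrite ?rpred_int.
Qed.

Lemma LogDer_sVP theta : Theta_sV k B g s theta ->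
  LogDer_sV k B g s theta <-> theta g / g * g ^ s \in B.
Proof.
move=> [theta_der thetaB]; split=> [[_ thetaV] | betaB].
  have -> : theta g / g * g ^ s = theta g * g ^ (s - 1) by rewrite expfzDr // exprN1; ring.
  by have := thetaV 1 (rpred1 B); rewrite mulr1.
split=> // x xB; case: (theta_der) => _ thetaM _.
have -> : theta (g * x) * g ^ (s - 1) = (theta g / g * g ^ s) * x + theta x * g ^ s.
  by rewrite thetaM // expfzDr // exprN1; field.
by apply: rpredD; [exact: rpredM | exact: thetaB].
Qed.

Lemma LogDer_sV_lift theta : LogDer_sV k B g s theta ->
  Theta_sV k B g s theta /\ exists gam, admissible gam (theta g / g).
Proof.
move=> logder; have theta_s := logder.1; split=> //; exists 0.
by apply: admissible_le; rewrite ?mul0r ?rpred0 // -LogDer_sVP.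
Qed.

Section Subfield.
Hypotheses (k_subfield : is_subfield k) (k_sub_B : {subset k <= B}).

Lemma intr_inv_in (z : int) : (z%:~R : K)^-1 \in B.
Proof.
case: k_subfield => k1 kB kM kV.
pose ks : subringClosed K :=
  HB.pack_for (subringClosed K) k (GRing.isSubringClosed.Build K k (And3 k1 kB kM)).
by apply/k_sub_B/kV; exact: (rpred_int ks z).
Qed.

Lemma intr_mul_inP (z : int) x : (z%:~R : K) != 0 -> z%:~R * x \in B -> x \in B.
Proof. by move=> z0 zx; rewrite -(mulKf z0 x) rpredM // intr_inv_in. Qed.

Lemma ses_U_Theta_sV :
  p * d - q%:Z * s = q%:Z - 1 -> (q%:~R : K) != 0 ->
  ses_U k B g p q d s (Theta_sV k B g s).
Proof.
move=> rd q_neq0; have qR_neq0 : (q%:R : K) != 0 by [].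
apply: ses_U_of_admissible.
- move=> f; split=> [fs | /admissible_q]; first by apply: admissible_le; rewrite // mul0r rpred0.
  by rewrite mulr0 subr0 -mulrA; apply: intr_mul_inP.
- exact: Theta_sV_psiU.
- move=> theta [theta_der thetaB]; split=> //.
  exists (p%:~R / q%:~R * (theta g / g)) => i.
  have -> : i%:~R * (p%:~R / q%:~R * (theta g / g)) - (m i)%:~R * (theta g / g)
            = (p * i - q%:Z * m i)%:~R / q%:~R * (theta g / g).
    by rewrite intrB !intrM; field; rewrite qR_neq0 g_neq0.
  have [piE | piN] := eqVneq (p * i) (q%:Z * m i).
    by rewrite piE subrr !mul0r rpred0.
  (* off the multiples of q the degree jumps by s + 1, absorbing the pole of theta g / g *)
  rewrite floorq_addS // expfzDr // expr1z.
  have -> : (p * i - q%:Z * m i)%:~R / q%:~R * (theta g / g) * (g ^ s * g)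
            = (p * i - q%:Z * m i)%:~R * (q%:~R)^-1 * (theta g * g ^ s).
    by field; rewrite qR_neq0 g_neq0.
  by rewrite rpredM ?(thetaB _ g_in) // rpredM ?rpred_int ?intr_inv_in.
Qed.

Lemma ses_U_LogDer_sV_pchar :
  coprime `|p|%N q -> p * d - q%:Z * s = q%:Z - 1 ->
  (q%:~R : K) = 0 -> (p%:~R : K) != 0 ->
  ses_U k B g p q d (s + 1) (LogDer_sV k B g s).
Proof.
move=> copq rd q0 p_neq0.
have q_gt1 : (1 < q)%N.
  case: (ltnP 1 q) => // q_le1; have q1 : q = 1%N by lia.
  by move: q0; rewrite q1 mulr1z => /eqP; rewrite oner_eq0.
have [i0 ri0] := exists_floorq_rem1 p q_gt0 copq q_gt1.
have Ei0 : E i0 <= s + 1.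
  by rewrite floorq_addS //; apply/eqP => pi0E; move: ri0; rewrite pi0E subrr.
apply: ses_U_of_admissible.
- move=> f; split=> [fs1 i | adm]; last first.
    by have [] := admissible_bezout _ _ _ _ adm ri0 Ei0 (lerDl s 1).
  rewrite mulr0 subr0; have [piE | piN] := eqVneq (p * i) (q%:Z * m i).
    (* in characteristic dividing q, q | p i forces i = 0 in K *)
    have : p%:~R * i%:~R = 0 :> K by rewrite -intrM piE intrM q0 mul0r.
    by move/eqP; rewrite mulf_eq0 (negbTE p_neq0) /= => /eqP ->; rewrite !mul0r rpred0.
  by rewrite floorq_addS // -mulrA rpredM ?rpred_int.
- move=> delta der; apply/(LogDer_sVP _ (Theta_sV_psiU _ der)).
  have [gam /admissible_q] := graded_der_admissible _ der.
  rewrite q0 mul0r sub0r mulNr rpredN -mulrA; exact: intr_mul_inP.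
- exact: LogDer_sV_lift.
Qed.

Lemma ses_U_LogDer_sV :
  coprime `|p|%N q -> p * d - q%:Z * s != q%:Z - 1 ->
  ses_U k B g p q d s (LogDer_sV k B g s).
Proof.
move=> copq rd.
have [i0 ri0] := exists_floorq_rem1 p q_gt0 copq (q_gt1_of_rem p q_gt0 d rd).
have Ei0 : E i0 <= s by rewrite floorq_addr1.
apply: ses_U_of_admissible.
- move=> f; split=> [fs | adm]; first by apply: admissible_le; rewrite // mul0r rpred0.
  by have [] := admissible_bezout _ _ _ _ adm ri0 Ei0 (lexx s).
- move=> delta der; apply/(LogDer_sVP _ (Theta_sV_psiU _ der)).
  have [gam adm] := graded_der_admissible _ der.
  by have [] := admissible_bezout _ _ _ _ adm ri0 Ei0 (lexx s).
- exact: LogDer_sV_lift.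
Qed.

End Subfield.

End GradedDerivations.

Lemma natr_neq0_of_not_char_dvd (K : fieldType) (q : nat) :
  (0 < q)%N -> ~ char_dvd K q -> (q%:~R : K) != 0.
Proof.
move=> q_gt0 ndvd; apply/negP => q0.
have [w wchar] := natf0_pchar q_gt0 (q0 : (q%:R : K) == 0).
by apply: ndvd; exists w; rewrite // (dvdn_pcharf wchar).
Qed.

Lemma char_dvd_natr0 (K : fieldType) (q : nat) : char_dvd K q -> (q%:~R : K) = 0.
Proof. by case=> w wchar wq; apply/eqP; have := dvdn_pcharf wchar q; rewrite wq => <-. Qed.

Lemma intr_neq0_of_char_dvd (K : fieldType) (p : int) (q : nat) :
  char_dvd K q -> coprime `|p|%N q -> (p%:~R : K) != 0.
Proof.
case=> w wchar wq copq; apply/negP => /eqP p0.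
have : (w %| gcdn `|p| q)%N.
  rewrite dvdn_gcd wq andbT (dvdn_pcharf wchar).
  have -> : (`|p|%N%:R : K) = ((-1) ^+ (p < 0)%R * p)%:~R by rewrite -abszEsign.
  by rewrite intrM p0 mulr0.
move/eqP: copq => ->; rewrite dvdn1 => /eqP w1.
by have := pcharf_prime wchar; rewrite w1.
Qed.

Theorem proposition4p3 (K : fieldType) (k B : {pred K}) (g : K)
    (p : int) (q : nat) (d : int) :
  is_subfield k -> is_subring B -> {subset k <= B} ->
  fg_algebra k B -> is_frac_field_of B -> integrally_closed B ->
  g \in B -> g != 0 -> (g^-1 \in B \/ prime_elt B g) ->
  (0 < q)%N -> coprime `|p|%N q ->
  let s := ((p * d) %/ q%:Z)%Z in
  [/\ ((p * d = -1 %[mod q%:Z])%Z -> ~ char_dvd K q ->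
         ses_U k B g p q d s (Theta_sV k B g s)),
      ((p * d = -1 %[mod q%:Z])%Z -> char_dvd K q ->
         ses_U k B g p q d (s + 1) (LogDer_sV k B g s))
    & (~ (p * d = -1 %[mod q%:Z])%Z ->
         ses_U k B g p q d s (LogDer_sV k B g s))].
Proof.
move=> k_subfield B_subring k_sub_B _ _ _ g_in g_neq0 _ q_gt0 copq s.
pose Bs : subringClosed K :=
  HB.pack_for (subringClosed K) B (GRing.isSubringClosed.Build K B B_subring).
have modE := modz_eqN1E q_gt0 (p * d).
split=> [/modE rd ndvd | /modE rd qdvd | rdN].
- apply: (ses_U_Theta_sV _ k Bs) => //.
  exact: natr_neq0_of_not_char_dvd.
- apply: (ses_U_LogDer_sV_pchar _ k Bs) => //.
    exact: char_dvd_natr0.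
  exact: intr_neq0_of_char_dvd _ _ _ qdvd copq.
- apply: (ses_U_LogDer_sV _ k Bs) => //.
  by apply/eqP => rd; apply: rdN; apply/modE.
Qed.
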